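(* Suppose an affine plane of order $k-1$ exists, and let $H_1,\ldots,H_k$ be graphs with $n(H_i)<k$ for each $i$. Then $f(H_1,\ldots,H_k)\le (k-1)^2$.
   Context: All graphs are finite and simple; $n(H)$ is the number of vertices of $H$. A graph $G$ is $(H_1,\ldots,H_k)$-full if every vertex of $G$ belongs to an induced subgraph of $G$ isomorphic to $H_i$, for each $i$. $f(H_1,\ldots,H_k)$ denotes the minimum order of an $(H_1,\ldots,H_k)$-full graph. An affine plane of order $q$ is a resolvable Steiner system $S(q^2,q,2)$: a $q$-uniform hypergraph on $q^2$ vertices in which every pair of vertices lies in exactly one edge, whose edge set can be partitioned into perfect matchings. *)

From mathcomp Require Import all_boot.
Set Implicit Arguments. Unset Strict Implicit. Unset Printing Implicit Defensive.

Record sgraph := SGraph {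
  svert :> finType;
  sadj : rel svert;
  sadj_sym : symmetric sadj;
  sadj_irr : irreflexive sadj }.

Definition nverts (G : sgraph) : nat := #|svert G|.

Definition in_induced_copy (H G : sgraph) (v : svert G) : Prop :=
  exists f : svert H -> svert G,
    [/\ injective f,
        (forall x y : svert H, @sadj G (f x) (f y) = @sadj H x y)
      & v \in codom f].

Definition full (k : nat) (Hs : 'I_k -> sgraph) (G : sgraph) : Prop :=
  forall (i : 'I_k) (v : svert G), @in_induced_copy (Hs i) G v.

(* An affine plane of nverts q on the point set T with block (line) set B:
   a resolvable Steiner system S(q^2, q, 2). *)
Definition affine_plane (q : nat) (T : finType) (B : {set {set T}}) : Prop :=
  [/\ #|T| = q ^ 2,
      (forall b, b \in B -> #|b| = q),
      (forall x y : T, x != y -> #|[set b in B | (x \in b) && (y \in b)]| = 1)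
    & exists P : {set {set {set T}}},
        partition P B /\
        (forall M, M \in P -> trivIset M /\ cover M = [set: T])].

From mathcomp Require Import all_boot zify.
Set Implicit Arguments. Unset Strict Implicit. Unset Printing Implicit Defensive.

(* An affine plane of order q = k - 1 has q + 1 = k parallel classes.  Give the
   i-th class to H_i and label the points of each of its lines onto V(H_i), which
   is possible since lines have q >= n(H_i) points; join two points when some class
   puts them on a common line with adjacent labels.  As two points lie on exactly
   one line, the graph induced on a line of class i is the pullback of H_i along the
   labelling, so a section of the labelling through any point is an induced copy of
   H_i.  For k = 2 the plane is a single point with a single class, but then every
   H_i is K_1. *)

Lemma exists_injective_in (T : finType) (A : {pred T}) k :
  k <= #|A| -> exists f : 'I_k -> T, injective f /\ forall i, f i \in A.
Proof.
move=> le_kA; exists (fun i => enum_val (widen_ord le_kA i)); split.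
- by move=> i j /enum_val_inj /(congr1 val) /= /val_inj.
- by move=> i; apply: enum_valP.
Qed.

Section AffinePlane.

Variables (q : nat) (T : finType) (B : {set {set T}}) (P : {set {set {set T}}}).
Hypotheses (card_T : #|T| = q ^ 2) (card_line : forall b, b \in B -> #|b| = q).
Hypothesis line_through2 :
  forall x y : T, x != y -> #|[set b in B | (x \in b) && (y \in b)]| = 1.
Hypotheses (partition_P : partition P B)
  (parallel_P : forall M, M \in P -> trivIset M /\ cover M = [set: T]).

Lemma line_unique x y b c : x != y -> b \in B -> c \in B ->
  x \in b -> y \in b -> x \in c -> y \in c -> b = c.
Proof.
move=> neq_xy bB cB xb yb xc yc.
have /eqP/cards1P[d def_d] := line_through2 neq_xy.
have : b \in [set d] by rewrite -def_d inE bB xb yb.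
have : c \in [set d] by rewrite -def_d inE cB xc yc.
by rewrite !inE => /eqP-> /eqP->.
Qed.

Lemma line_of_class M b : M \in P -> b \in M -> b \in B.
Proof.
by case/and3P: partition_P => /eqP <- _ _ MP bM; apply/bigcupP; exists M.
Qed.

Lemma eq_class_of_line M N b : M \in P -> N \in P -> b \in M -> b \in N -> M = N.
Proof.
case/and3P: partition_P => _ tiP _ MP NP bM bN.
by rewrite -(def_pblock tiP MP bM) (def_pblock tiP NP bN).
Qed.

Lemma card_lines_through x : 1 < q -> q.+1 <= #|[set b in B | x \in b]|.
Proof.
move=> gt1q; set L := [set b in B | x \in b].
set punctured := [set b :\ x | b in L].
have sub_cover : [set~ x] \subset cover punctured.
  apply/subsetP => y; rewrite !inE => neq_yx.
  have : 0 < #|[set b in B | (y \in b) && (x \in b)]| by rewrite line_through2.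
  case/card_gt0P => b; rewrite !inE => /and3P[bB yb xb].
  apply/bigcupP; exists (b :\ x); last by rewrite !inE neq_yx.
  by apply/imsetP; exists b; rewrite ?inE ?bB.
have card_punctured : \sum_(A in punctured) #|A| = #|punctured| * q.-1.
  rewrite -sum_nat_const; apply: eq_bigr => A /imsetP[b].
  rewrite inE => /andP[bB xb] ->.
  by have := cardsD1 x b; rewrite xb card_line //; lia.
have := leq_trans (subset_leq_card sub_cover) (leq_card_cover punctured).
rewrite cardsC1 card_T card_punctured => le_q2.
have le_L : #|punctured| * q.-1 <= #|L| * q.-1 by rewrite leq_mul2r leq_imset_card orbT.
have := leq_trans le_q2 le_L.
have -> : (q ^ 2).-1 = q.+1 * q.-1 by rewrite expnS expn1; lia.
by rewrite leq_mul2r; case/orP=> //; lia.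
Qed.

Lemma card_parallel_classes : 1 < q -> q.+1 <= #|P|.
Proof.
move=> gt1q; have /card_gt0P[x _] : 0 < #|T| by rewrite card_T expn_gt0; lia.
apply: leq_trans (card_lines_through x gt1q) _.
have cover_P b : b \in B -> b \in cover P by case/and3P: partition_P => /eqP->.
have inj_class : {in [set b in B | x \in b] &, injective (pblock P)}.
  move=> b c; rewrite !inE => /andP[bB xb] /andP[cB xc] eq_class.
  have MP := pblock_mem (cover_P b bB).
  have [tiM _] := parallel_P MP.
  have bM : b \in pblock P b by rewrite mem_pblock cover_P.
  have cM : c \in pblock P b by rewrite eq_class mem_pblock cover_P.
  by rewrite -(def_pblock tiM bM xb) (def_pblock tiM cM xc).
rewrite -(card_in_imset inj_class); apply/subset_leq_card/subsetP => M /imsetP[b].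
by rewrite inE => /andP[bB _] ->; apply/pblock_mem/cover_P.
Qed.

End AffinePlane.

Section BlockLabel.

Variables (T H : finType) (h0 : H) (M : {set {set T}}).

(* Points whose rank in their block is at least #|H| get the junk label h0. *)
Definition block_label (x : T) : H :=
  nth h0 (enum H) (index x (enum (pblock M x))).

Lemma block_label_onto b : trivIset M -> b \in M -> #|H| <= #|b| ->
  forall h, exists2 x, x \in b & block_label x = h.
Proof.
move=> tiM bM le_Hb h.
have lt_hH : index h (enum H) < #|H| by rewrite cardE index_mem mem_enum.
have lt_hb : index h (enum H) < size (enum b) by rewrite -cardE (leq_trans lt_hH).
have /card_gt0P[x0 _] : 0 < #|b| by apply: leq_trans le_Hb; apply: leq_ltn_trans lt_hH.
set x := nth x0 (enum b) (index h (enum H)).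
have xb : x \in b by rewrite -mem_enum mem_nth.
exists x => //.
by rewrite /block_label (def_pblock tiM bM xb) index_uniq ?enum_uniq // nth_index ?mem_enum.
Qed.

End BlockLabel.

Section PullbackGraph.

Variables (T : finType) (k : nat) (Hs : 'I_k -> sgraph).
Variables (cls : 'I_k -> {set {set T}}) (lab : forall i, T -> Hs i).

Definition pullback_adj : rel T := fun x y =>
  [exists i, (pblock (cls i) x == pblock (cls i) y) && sadj (lab i x) (lab i y)].

Lemma pullback_adj_sym : symmetric pullback_adj.
Proof.
by move=> x y; apply/existsP/existsP => -[i /andP[e a]]; exists i; rewrite eq_sym e sadj_sym.
Qed.

Lemma pullback_adj_irr : irreflexive pullback_adj.
Proof. by move=> x; apply/existsP => -[i]; rewrite sadj_irr andbF. Qed.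

Definition pullback_graph : sgraph := SGraph pullback_adj_sym pullback_adj_irr.

Hypothesis parallel_cls : forall i, trivIset (cls i) /\ cover (cls i) = [set: T].
Hypothesis cls_disjoint : forall i j b, b \in cls i -> b \in cls j -> i = j.
Hypothesis cls_line_unique : forall i j b c x y, b \in cls i -> c \in cls j -> x != y ->
  x \in b -> y \in b -> x \in c -> y \in c -> b = c.
Hypothesis lab_onto : forall i b, b \in cls i -> forall h, exists2 x, x \in b & lab i x = h.

Lemma pblock_cls i x : pblock (cls i) x \in cls i /\ x \in pblock (cls i) x.
Proof.
have cover_x : x \in cover (cls i) by rewrite (parallel_cls i).2 inE.
by rewrite pblock_mem // mem_pblock.
Qed.

Lemma pullback_adj_in_block i b x y : b \in cls i -> x \in b -> y \in b ->
  pullback_adj x y = sadj (lab i x) (lab i y).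
Proof.
move=> bi xb yb; have [tiM _] := parallel_cls i.
apply/existsP/idP => [[j /andP[/eqP same_block adj_j]] | adj_i]; last first.
  by exists i; rewrite (def_pblock tiM bi xb) (def_pblock tiM bi yb) eqxx.
have [cj xc] := pblock_cls j x; set c := pblock (cls j) x in cj xc same_block.
have yc : y \in c by rewrite same_block; case: (pblock_cls j y).
have neq_xy : x != y by apply: contraTneq adj_j => ->; rewrite sadj_irr.
have bj : b \in cls j by rewrite (cls_line_unique bi cj neq_xy xb yb xc yc).
by rewrite -(cls_disjoint bi bj) in adj_j.
Qed.

Lemma lab_section i v : exists s : Hs i -> T,
  [/\ cancel s (lab i), forall h, s h \in pblock (cls i) v & v \in codom s].
Proof.
have [bi vb] := pblock_cls i v; set b := pblock (cls i) v in bi vb *.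
pose s h := if h == lab i v then v else odflt v [pick x in b | lab i x == h].
have s_spec h : s h \in b /\ lab i (s h) = h.
  rewrite /s; case: eqP => [-> // | _].
  case: pickP => [x /andP[xb /eqP] // | no_x].
  have [x xb lab_x] := lab_onto bi h.
  by have := no_x x; rewrite xb lab_x eqxx.
exists s; split=> [h | h |]; first exact: (s_spec h).2; first exact: (s_spec h).1.
by apply/codomP; exists (lab i v); rewrite /s eqxx.
Qed.

Lemma pullback_graph_full : full Hs pullback_graph.
Proof.
move=> i v; have [s [sK s_block v_s]] := lab_section i v.
have [bi _] := pblock_cls i v.
exists s; split=> // [|x y]; first exact: can_inj sK.
by rewrite /= (pullback_adj_in_block bi (s_block x) (s_block y)) !sK.
Qed.

End PullbackGraph.

Definition edgeless_graph (T : finType) : sgraph :=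
  @SGraph T [rel x y | false] (fun _ _ => erefl) (fun _ => erefl).

Lemma full_of_single_vertices k (Hs : 'I_k -> sgraph) (G : sgraph) :
  (forall i, nverts (Hs i) = 1) -> full Hs G.
Proof.
move=> single i v; have /fintype_le1P all_eq : #|Hs i| <= 1 by rewrite [#|_|]single.
have /card_gt0P[h _] : 0 < #|Hs i| by rewrite [#|_|]single.
exists (fun _ => v); split=> [x y _ | x y |]; first exact: all_eq.
- by rewrite (all_eq x y) !sadj_irr.
- by apply/codomP; exists h.
Qed.

Theorem corollary2p3 (k : nat) (Hs : 'I_k -> sgraph) :
  0 < k ->
  (exists (T : finType) (B : {set {set T}}), affine_plane (k - 1) B) ->
  (forall i : 'I_k, 0 < nverts (Hs i) < k) ->
  exists G : sgraph, [/\ 0 < nverts G, nverts G <= (k - 1) ^ 2 & full Hs G].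
Proof.
move=> k_gt0 [T [B [card_T card_line line_through2 [P [partition_P parallel_P]]]]].
move=> nvertsHs.
have k_gt1 : 1 < k by have := nvertsHs (Ordinal k_gt0); lia.
suff [G [card_G fullG]] : exists G : sgraph, nverts G = (k - 1) ^ 2 /\ full Hs G.
  by exists G; rewrite card_G expn_gt0; split=> //; lia.
have [le_k2 | lt2k] := leqP k 2.
  exists (edgeless_graph T); split=> //.
  by apply: full_of_single_vertices => i; have := nvertsHs i; lia.
have le_kP : k <= #|P|.
  have := card_parallel_classes card_T card_line line_through2 partition_P parallel_P.
  lia.
have [cls [cls_inj clsP]] := exists_injective_in le_kP.
have Hs_gt0 i : 0 < #|Hs i| by case/andP: (nvertsHs i).
pose lab i := block_label (enum_val (Ordinal (Hs_gt0 i))) (cls i).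
exists (pullback_graph cls lab); split=> //.
apply: pullback_graph_full => [i | i j b bi bj | i j b c x y bi cj | i b bi].
- exact: parallel_P (clsP i).
- exact/cls_inj/(eq_class_of_line partition_P (clsP i) (clsP j) bi bj).
- move=> neq_xy; apply: (line_unique line_through2 neq_xy).
  + exact: (line_of_class partition_P (clsP i) bi).
  + exact: (line_of_class partition_P (clsP j) cj).
- apply: (block_label_onto _ (parallel_P _ (clsP i)).1 bi).
  rewrite card_line; last exact: (line_of_class partition_P (clsP i) bi).
  by have := nvertsHs i; rewrite /nverts; lia.
Qed.
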